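(* Let $3\le q<\infty$ and let $G=(V,E,F)$ be a $q$-face regular plane tessellation with non-positive vertex curvature, $v_0\in V$, and let $\kappa_k$, $N$, $b_l$ be as in the context; let $k\ge 1$. Then: (a) $b_0-\kappa_k\ge1$. (b) $b_{N-1}-\kappa_k\ge1$ if $N\ge2$. (c) $b_0-\kappa_k\ge2$ if $q=3$ or $q=4$. (d) Let $n,N\ge1$ and $1\le k\le\min\{n,N\}$, and assume that real numbers $\gamma_i\ge0$ are monotone non-decreasing for $n-k+1\le i\le n-1$. Then $\sum_{l=1}^{k-1}(b_l-\kappa_{n-l})\gamma_{n-l}\ge0$.
   Context: A $q$-face regular plane tessellation is a locally tessellating planar graph (simple planar graph — no loops, multiple edges or degree-one vertices, finite degrees, locally finitely many faces — in which every edge lies in exactly two faces, two faces are disjoint or share exactly a vertex or an edge path, and every face is a closed topological disc, complement of an open disc, or closed half plane with boundary a path) in which every face has degree $q$. Vertex curvature: $\kappa(v)=1-\frac{|v|}2+\sum_{f\ni v}\frac1{|f|}$. With $d$ the combinatorial distance, $S_k=\{v:d(v_0,v)=k\}$, $\sigma_k=|S_k|$ and $\kappa_k=\frac{2q}{q-2}\cdot\frac1{\sigma_k}\sum_{v\in S_k}\kappa(v)$. $N=\frac{q-2}2$ if $q$ is even and $N=q-2$ if $q$ is odd. For $0\le l\le N-1$, $b_l=\frac4{q-2}$ except $b_l=\frac4{q-2}-2$ when $q$ is odd and $l=\frac{N-1}2$. *)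

From mathcomp Require Import all_boot all_order all_algebra.
Set Implicit Arguments. Unset Strict Implicit. Unset Printing Implicit Defensive.
Import Order.TTheory GRing.Theory Num.Theory.

(* A (combinatorial) plane graph with faces:
   - vertices : an eqType V; [nbrs v] = the (finite, duplicate-free) list of
     neighbours of v (finite degrees);
   - faces : an eqType Fc; [fbd f] = the boundary of face f listed as a
     cyclic sequence of vertices;
   - [vfaces v] = the (finite) duplicate-free list of faces containing v
     (locally finitely many faces). *)

Section Tess.
Variables (V Fc : eqType) (nbrs : V -> seq V) (fbd : Fc -> seq V)
  (vfaces : V -> seq Fc).

Definition adj (u w : V) : bool := w \in nbrs u.

Definition face_edge (f : Fc) (u w : V) : bool :=
  ((u \in fbd f) && (w == next (fbd f) u)) ||
  ((w \in fbd f) && (u == next (fbd f) w)).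

(* Two distinct faces are disjoint, or share exactly one vertex, or share
   exactly an edge path (a proper arc of both boundary cycles). *)
Definition faces_meet_well (f g : Fc) : Prop :=
  exists s : seq V,
    (forall x, (x \in s) = (x \in fbd f) && (x \in fbd g)) /\
    (size s <= 1 \/
     [/\ size s < size (fbd f), size s < size (fbd g),
         (exists i, take (size s) (rot i (fbd f)) = s) &
         (exists j, take (size s) (rot j (fbd g)) = s \/
                    take (size s) (rot j (fbd g)) = rev s)])%N.

Fixpoint ball (v0 : V) (k : nat) : seq V :=
  match k with
  | 0 => [:: v0]
  | k'.+1 => undup (ball v0 k' ++ flatten (map nbrs (ball v0 k')))
  end.

Definition sphere (v0 : V) (k : nat) : seq V :=
  [seq v <- ball v0 k | if k is k'.+1 then v \notin ball v0 k' else true].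

Record q_face_regular_tessellation (q : nat) : Prop := {
  tess_simple : forall v, uniq (nbrs v) /\ v \notin nbrs v;
  tess_sym : forall u w, adj u w = adj w u;
  tess_nodeg1 : forall v, size (nbrs v) != 1%N;
  tess_face : forall f, [/\ uniq (fbd f), size (fbd f) = q & cycle adj (fbd f)];
  tess_vfaces : forall v, uniq (vfaces v) /\ forall f, (f \in vfaces v) = (v \in fbd f);
  tess_edge2 : forall u w, adj u w -> count (fun f => face_edge f u w) (vfaces u) = 2%N;
  tess_meet : forall f g, f <> g -> faces_meet_well f g;
  tess_conn : forall u w, exists k, w \in ball u k;
  tess_inf : forall s : seq V, exists v, v \notin s }.

Variable R : realFieldType.
Local Open Scope ring_scope.

Definition kappa (v : V) : R :=
  1 - (size (nbrs v))%:R / 2 + \sum_(f <- vfaces v) ((size (fbd f))%:R)^-1.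

Definition kappa_sph (q : nat) (v0 : V) (k : nat) : R :=
  (2 * q%:R / (q%:R - 2)) * ((size (sphere v0 k))%:R)^-1 *
  \sum_(v <- sphere v0 k) kappa v.

End Tess.

Definition Nq (q : nat) : nat := if odd q then (q - 2)%N else ((q - 2) %/ 2)%N.

Definition bq (R : realFieldType) (q l : nat) : R :=
  (4 / (q%:R - 2) - (if odd q && (l == ((Nq q - 1) %/ 2)%N) then 2 else 0))%R.

From mathcomp Require Import all_boot all_order all_algebra.
From mathcomp Require Import ring lra zify.
Set Implicit Arguments.
Unset Strict Implicit.
Import Order.TTheory GRing.Theory Num.Theory.
Local Open Scope ring_scope.

(* Counting incidences of edges and faces at a vertex v shows that v lies on
   exactly deg v faces, so with c := 2q/(q-2) the scaled curvature is
   c kappa(v) = c - deg v, and kappa_k is the average of c - deg over S_k.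
   Non-positive curvature means deg v >= c > 2, hence deg v >= 3, and
   kappa_k <= c - 3, while b_l = c - 2 except at the one index l with
   q = 2l + 3, where b_l = c - 4.  This gives (a)-(c).  In (d) the term of
   that index m is the only one that can be negative, and it is at least
   -gamma_{n-m}; it is absorbed by the term l = m - 1, which is at least
   gamma_{n-m+1} >= gamma_{n-m}.  For q = 5 (m = 1) there is no such term,
   but then c = 10/3 is not an integer, so deg >= 4 and the term is >= 0. *)

Lemma next_neq_prev (T : eqType) (p : seq T) x :
  uniq p -> (2 < size p)%N -> x \in p -> next p x != prev p x.
Proof.
move=> up sp xp; case: (rot_to xp) => i s Hs.
rewrite -(next_rot i up) -(prev_rot i up) Hs.
have : uniq (x :: s) by rewrite -Hs rot_uniq.
have : size (x :: s) = size p by rewrite -Hs size_rot.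
case: s {Hs} => [|a [|b t]] /= => [E|E|_]; rewrite -?E // in sp.
rewrite !inE !eqxx /= => /andP[] /norP[xa /norP[xb xt]] /andP[/norP[ab at_] _].
rewrite (negbTE xa) (negbTE xb).
have -> : prev_at x x b t = last b t.
  clear -xt; elim: t b xt => [|d t IH] b /=; first by rewrite eqxx.
  by rewrite inE negb_or => /andP[/negbTE -> /IH].
apply/eqP => E; have : last b t \in b :: t by exact: mem_last.
by rewrite -E inE (negbTE ab) (negbTE at_).
Qed.

Lemma sum_ge0_compensated (R : realDomainType) (a g : nat -> R) (m k : nat) :
  (1 < m < k)%N ->
  (forall l, (1 <= l < k)%N -> 0 <= g l) ->
  (forall l, (1 <= l < k)%N -> l != m -> 1 <= a l) ->
  -1 <= a m -> g m <= g m.-1 ->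
  0 <= \sum_(1 <= l < k) a l * g l.
Proof.
move=> /andP[m_gt1 m_ltk] g_ge0 a_ge1 am_geN1 g_mono.
have sum_ge0 i j : (1 <= i)%N -> (j <= k)%N -> (forall l, (i <= l < j)%N -> l != m) ->
    0 <= \sum_(i <= l < j) a l * g l.
  move=> i1 jk l_neq; rewrite big_nat; apply: sumr_ge0 => l l_range.
  have lk : (1 <= l < k)%N by move: l_range; lia.
  exact: mulr_ge0 (le_trans ler01 (a_ge1 l lk (l_neq l l_range))) (g_ge0 l lk).
rewrite (@big_cat_nat _ _ _ m.-1) /=; [|lia|lia].
rewrite [\sum_(m.-1 <= _ < k) _]big_ltn; last lia.
rewrite prednK; last lia.
rewrite [\sum_(m <= _ < k) _]big_ltn; last lia.
have am1_ge1 : 1 <= a m.-1 by apply: a_ge1; [apply/andP; split|apply/eqP]; lia.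
have gm1_ge0 : 0 <= g m.-1 by apply: g_ge0; apply/andP; split; lia.
have gm_ge0 : 0 <= g m by apply: g_ge0; apply/andP; split; lia.
have low := sum_ge0 1%N m.-1 (leqnn 1) ltac:(lia) ltac:(move=> l ?; apply/eqP; lia).
have high := sum_ge0 m.+1 k ltac:(lia) (leqnn k) ltac:(move=> l ?; apply/eqP; lia).
have pair_ge0 : 0 <= a m.-1 * g m.-1 + a m * g m.
  have := ler_peMl gm1_ge0 am1_ge1.
  have : 0 <= (a m + 1) * g m by apply: mulr_ge0; rewrite // -lerBlDr sub0r.
  rewrite mulrDl mul1r; lra.
lra.
Qed.

Section Tessellation.

Variables (V Fc : eqType) (nbrs : V -> seq V) (fbd : Fc -> seq V)
  (vfaces : V -> seq Fc) (q : nat).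
Hypothesis q_ge3 : (3 <= q)%N.
Hypothesis tess : q_face_regular_tessellation nbrs fbd vfaces q.

Lemma face_edgeE f v w : v \in fbd f ->
  face_edge fbd f v w = (w == next (fbd f) v) || (w == prev (fbd f) v).
Proof.
have [uf _ _] := tess_face tess f.
move=> vf; rewrite /face_edge vf /=; congr orb.
apply/andP/eqP => [[wf /eqP ->]|->]; first by rewrite prev_next.
by rewrite mem_prev vf next_prev.
Qed.

(* Every face at v contributes exactly two edges at v, and every edge at v
   lies in exactly two faces. *)
Lemma size_vfaces v : size (vfaces v) = size (nbrs v).
Proof.
pose inc w f : nat := face_edge fbd f v w.
have two_faces : \sum_(w <- nbrs v) \sum_(f <- vfaces v) inc w f
                 = (2 * size (nbrs v))%N.
  rewrite -iter_addn_0 -count_predT -big_const_seq.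
  apply: eq_big_seq => w wv; rewrite -(tess_edge2 tess wv).
  by rewrite -sum1_count [RHS]big_mkcond.
have two_edges : \sum_(w <- nbrs v) \sum_(f <- vfaces v) inc w f
                 = (2 * size (vfaces v))%N.
  rewrite exchange_big -iter_addn_0 -count_predT -big_const_seq.
  apply: eq_big_seq => f fv; rewrite /inc -big_mkcond sum1_count /=.
  have vf : v \in fbd f by rewrite -(proj2 (tess_vfaces tess v)).
  have [uf sf cf] := tess_face tess f.
  have ne : next (fbd f) v != prev (fbd f) v.
    by apply: next_neq_prev; rewrite // sf.
  rewrite (eq_count (a2 := predU (pred1 (next (fbd f) v)) (pred1 (prev (fbd f) v))));
    last by move=> w; rewrite face_edgeE.
  have [un _] := tess_simple tess v.
  have := count_predUI (pred1 (next (fbd f) v)) (pred1 (prev (fbd f) v)) (nbrs v).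
  rewrite (@eq_count _ (predI _ _) pred0); last first.
    by move=> w /=; apply/andP => -[/eqP -> /eqP E]; rewrite E eqxx in ne.
  rewrite count_pred0 addn0 => ->; rewrite !count_uniq_mem //.
  have := next_cycle cf vf; rewrite /adj => ->.
  by have := prev_cycle cf vf; rewrite (tess_sym tess) /adj => ->.
by apply/eqP; rewrite -(eqn_pmul2l (isT : (0 < 2)%N)) -two_faces -two_edges.
Qed.

Lemma mem_ballS v0 j x :
  (x \in ball nbrs v0 j.+1) =
  (x \in ball nbrs v0 j) || has (fun y => x \in nbrs y) (ball nbrs v0 j).
Proof.
rewrite /= mem_undup mem_cat; congr orb.
by apply/flatten_mapP/hasP => -[y ? ?]; exists y.
Qed.

Lemma sub_ball v0 j k : (j <= k)%N -> {subset ball nbrs v0 j <= ball nbrs v0 k}.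
Proof.
move=> /subnK <-; elim: (k - j)%N => [|i IH] x // xj.
by rewrite addSn mem_ballS IH.
Qed.

(* If S_{k+1} were empty, the ball of radius k would be closed under taking
   neighbours, hence contain the whole (connected, infinite) graph. *)
Lemma size_sphere_gt0 v0 k : (0 < size (sphere nbrs v0 k))%N.
Proof.
case: k => [|k] //; rewrite /sphere lt0n size_eq0 -has_filter.
apply: contraT => /hasPn ballS_sub.
have ball_sub j : {subset ball nbrs v0 j <= ball nbrs v0 k}.
  case: (leqP j k) => [/sub_ball //|/ltnW /subnK <-].
  elim: (j - k)%N => [|i IH] x //.
  rewrite addSn mem_ballS => /orP[/IH //|/hasP[y /IH yk xy]].
  by apply/negPn/ballS_sub; rewrite mem_ballS; apply/orP; right; apply/hasP; exists y.
have [w wk] := tess_inf tess (ball nbrs v0 k).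
have [j wj] := tess_conn tess v0 w.
by rewrite (ball_sub j w wj) in wk.
Qed.

Variable R : realFieldType.

Definition curv_scale : R := 2 * q%:R / (q%:R - 2).

Let q2_neq0 : q%:R - 2 != 0 :> R.
Proof. by rewrite subr_eq0 (eqr_nat R q 2); case: q q_ge3 => [|[|[|]]]. Qed.

Lemma curv_scaleE : curv_scale = 2 + 4 / (q%:R - 2).
Proof. by rewrite /curv_scale; field. Qed.

Lemma curv_scale_gt2 : 2 < curv_scale.
Proof.
have q3 : 3 <= q%:R :> R by rewrite (ler_nat R 3 q).
by rewrite curv_scaleE ltrDl divr_gt0 //; lra.
Qed.

Lemma curv_scale_kappa v :
  curv_scale * kappa nbrs fbd vfaces R v = curv_scale - (size (nbrs v))%:R.
Proof.
have sf f : size (fbd f) = q by have [] := tess_face tess f.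
rewrite /kappa /curv_scale.
under eq_bigr do rewrite sf.
rewrite big_const_seq count_predT iter_addr_0 size_vfaces -mulr_natr.
have q0 : q%:R != 0 :> R by rewrite pnatr_eq0 -lt0n (leq_trans _ q_ge3).
by field; rewrite q0 q2_neq0.
Qed.

Lemma kappa_sph_le_deg v0 k (d : R) :
  (forall v, d <= (size (nbrs v))%:R) ->
  kappa_sph nbrs fbd vfaces R q v0 k <= curv_scale - d.
Proof.
move=> deg_ge; rewrite /kappa_sph -/curv_scale mulrAC mulr_sumr.
have sk : 0 < (size (sphere nbrs v0 k))%:R :> R by rewrite ltr0n size_sphere_gt0.
rewrite ler_pdivrMr // mulr_natr -iter_addr_0 -count_predT -big_const_seq big_mkcond.
by apply: ler_sum => v _; rewrite curv_scale_kappa lerD2l lerN2.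
Qed.

Lemma bqE l : bq R q l = curv_scale - 2 - (if q == (2 * l + 3)%N then 2 else 0).
Proof.
rewrite /bq curv_scaleE; congr (_ - _); first by rewrite addrAC subrr add0r.
congr (if _ then _ else _); rewrite /Nq; have := modn2 q.
case: (odd q) => /= q_mod2; first by apply/eqP/eqP; lia.
by apply/esym/eqP => qE; rewrite qE in q_mod2; lia.
Qed.

Hypothesis kappa_le0 : forall v, kappa nbrs fbd vfaces R v <= 0.

Lemma curv_scale_le_deg v : curv_scale <= (size (nbrs v))%:R.
Proof.
have := kappa_le0 v; rewrite -(pmulr_rle0 _ (lt_trans _ curv_scale_gt2)) //.
by rewrite curv_scale_kappa subr_le0.
Qed.

Lemma deg_ge3 v : (3 <= size (nbrs v))%N.
Proof. by rewrite -(ltr_nat R 2); have := curv_scale_le_deg v; have := curv_scale_gt2; lra. Qed.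

Lemma kappa_sph_le0 v0 k : kappa_sph nbrs fbd vfaces R q v0 k <= 0.
Proof. by rewrite -(subrr curv_scale); apply: kappa_sph_le_deg curv_scale_le_deg. Qed.

Lemma kappa_sph_le_scale3 v0 k : kappa_sph nbrs fbd vfaces R q v0 k <= curv_scale - 3.
Proof. by apply: kappa_sph_le_deg => v; rewrite (ler_nat R 3) deg_ge3. Qed.

Lemma bq_sub_kappa_sph_ge1 v0 k l : q != (2 * l + 3)%N ->
  1 <= bq R q l - kappa_sph nbrs fbd vfaces R q v0 k.
Proof. by move=> /negbTE ql; rewrite bqE ql; have := kappa_sph_le_scale3 v0 k; lra. Qed.

Lemma bq_sub_kappa_sph_ge_N1 v0 k l :
  -1 <= bq R q l - kappa_sph nbrs fbd vfaces R q v0 k.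
Proof. by rewrite bqE; have := kappa_sph_le_scale3 v0 k; case: ifP => _; lra. Qed.

Lemma bq_sub_kappa_sph_q5 v0 k l : q = 5%N ->
  0 <= bq R q l - kappa_sph nbrs fbd vfaces R q v0 k.
Proof.
move=> q5; have c103 : curv_scale = 10 / 3 by rewrite /curv_scale q5; field.
have deg4 v : 4 <= (size (nbrs v))%:R :> R.
  rewrite (ler_nat R 4); have := curv_scale_le_deg v; rewrite c103 -(ltr_nat R 3).
  by move=> ?; lra.
have := kappa_sph_le_deg v0 k deg4.
by rewrite bqE; case: ifP => _; lra.
Qed.

Lemma bq0_sub_kappa_sph_ge2 v0 k : (q = 3 \/ q = 4)%N ->
  2 <= bq R q 0 - kappa_sph nbrs fbd vfaces R q v0 k.
Proof.
move=> q34; have := kappa_sph_le0 v0 k; rewrite bqE /curv_scale.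
case: q34 => ->.
- by rewrite /= (_ : 2 * 3%:R / (3%:R - 2) = 6 :> R); [lra|field].
- by rewrite /= (_ : 2 * 4%:R / (4%:R - 2) = 4 :> R); [lra|field].
Qed.

Lemma bq0_sub_kappa_sph_ge1 v0 k :
  1 <= bq R q 0 - kappa_sph nbrs fbd vfaces R q v0 k.
Proof.
have [q3|q_neq3] := eqVneq q 3%N; last exact: bq_sub_kappa_sph_ge1.
by apply: le_trans (bq0_sub_kappa_sph_ge2 v0 k (or_introl q3)); lra.
Qed.

Lemma bq_Nq_pred_sub_kappa_sph_ge1 v0 k : (2 <= Nq q)%N ->
  1 <= bq R q (Nq q - 1) - kappa_sph nbrs fbd vfaces R q v0 k.
Proof.
move=> N_ge2; apply: bq_sub_kappa_sph_ge1; move: N_ge2; rewrite /Nq.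
by have := modn2 q; case: (odd q) => /= q_mod2 N_ge2; apply/eqP; lia.
Qed.

(* The only possibly negative term is the one with q = 2 m + 3. *)
Lemma sum_bq_sub_kappa_sph_ge0 v0 n k (g : nat -> R) :
  (forall l, (1 <= l < k)%N -> 0 <= g l) ->
  (forall l, (1 < l < k)%N -> g l <= g l.-1) ->
  0 <= \sum_(1 <= l < k) (bq R q l - kappa_sph nbrs fbd vfaces R q v0 (n - l)) * g l.
Proof.
move=> g_ge0 g_mono; set m := ((q - 3) %/ 2)%N.
have [/and3P[qm m_gt1 m_ltk]|not_qm] := boolP [&& q == (2 * m + 3)%N, (1 < m)%N & (m < k)%N].
  apply: (@sum_ge0_compensated _ _ _ m) => //; first by rewrite m_gt1.
  - by move=> l _ lm; apply: bq_sub_kappa_sph_ge1; apply: contra lm => /eqP ql; lia.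
  - exact: bq_sub_kappa_sph_ge_N1.
  - by apply: g_mono; rewrite m_gt1.
rewrite big_nat; apply: sumr_ge0 => l l_range; apply: mulr_ge0; last exact: g_ge0.
have [ql|/bq_sub_kappa_sph_ge1] := eqVneq q (2 * l + 3)%N; last by move/(_ v0 (n - l)%N); lra.
apply: bq_sub_kappa_sph_q5; move: not_qm; rewrite ql; lia.
Qed.

End Tessellation.

Theorem lemma6 (R : realFieldType) (q : nat) (V Fc : eqType)
    (nbrs : V -> seq V) (fbd : Fc -> seq V) (vfaces : V -> seq Fc) (v0 : V) :
  (3 <= q)%N ->
  q_face_regular_tessellation nbrs fbd vfaces q ->
  (forall v, kappa nbrs fbd vfaces R v <= 0) ->
  let kap := kappa_sph nbrs fbd vfaces R q v0 in
  let b := bq R q in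
  let N := Nq q in
  [/\ (* (a) *)
      (forall k, (1 <= k)%N -> 1 <= b 0%N - kap k),
      (* (b) *)
      (forall k, (1 <= k)%N -> (2 <= N)%N -> 1 <= b (N - 1)%N - kap k),
      (* (c) *)
      (forall k, (1 <= k)%N -> (q = 3%N \/ q = 4%N) -> 2 <= b 0%N - kap k) &
      (* (d) *)
      (forall (n k : nat) (gamma : nat -> R),
         (1 <= n)%N -> (1 <= N)%N -> (1 <= k)%N -> (k <= minn n N)%N ->
         (forall i, (n - k + 1 <= i <= n - 1)%N -> 0 <= gamma i) ->
         (forall i, (n - k + 1 <= i)%N -> (i.+1 <= n - 1)%N -> gamma i <= gamma i.+1) ->
         0 <= \sum_(1 <= l < k) (b l - kap (n - l)%N) * gamma (n - l)%N)].
Proof.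
move=> q_ge3 tess kappa_le0 kap b N; rewrite {}/kap {}/b {}/N; split=> [k _|k _|k _|n k gamma _ _ _].
- exact: bq0_sub_kappa_sph_ge1.
- exact: bq_Nq_pred_sub_kappa_sph_ge1.
- exact: bq0_sub_kappa_sph_ge2.
rewrite leq_min => /andP[k_len _] gamma_ge0 gamma_mono.
apply: (sum_bq_sub_kappa_sph_ge0 q_ge3 tess kappa_le0 v0 n (g := fun l => gamma (n - l)%N)).
- by move=> l l_range; apply: gamma_ge0; lia.
- move=> l l_range /=; have -> : (n - l.-1 = (n - l).+1)%N by lia.
  by apply: gamma_mono; lia.
Qed.
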